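(* Let $\theta=(\alpha,-(\alpha+\gamma)/4,\gamma)$ with $(\alpha,\gamma)$ in the fourth quadrant of the real $\alpha\gamma$-plane, and let $\mathcal{R}_{\theta}(1)$ be the moduli space of $\theta$-semistable representations of the quiver $\mathbf{Q}$ (with relations $\phi_i\eta_j+\phi_j\eta_i=0$) of dimension vector $(1,4,1)$. If $\gamma<-\alpha$, then $\mathcal{R}_{\theta}(1)$ consists exactly of the (orbits of) globally surjective representations which are locally injective; if $\gamma>-\alpha$, then $\mathcal{R}_{\theta}(1)$ consists exactly of the (orbits of) globally injective representations which are locally surjective.
   Context: $\mathbf{Q}$ is the quiver with three vertices $-1,0,1$, four arrows $\eta_0,\dots,\eta_3$ from vertex $-1$ to vertex $0$ and four arrows $\phi_0,\dots,\phi_3$ from vertex $0$ to vertex $1$. A representation $R$ with maps $f_{\eta_i}$, $g_{\phi_i}$ satisfies the relations if $g_{\phi_i}f_{\eta_j}+g_{\phi_j}f_{\eta_i}=0$ for $0\le i\le j\le 3$. $R$ is globally (resp. locally) injective if $\sum\lambda_i f_{\eta_i}$ is injective for every $(\lambda_0,\dots,\lambda_3)\in\mathbb{C}^4\setminus\{0\}$ (resp. away from a subset of codimension at least 2); globally (resp. locally) surjective is defined analogously with $\sum\lambda_i g_{\phi_i}$ surjective. A representation $V$ is $\theta$-semistable (resp. $\theta$-stable) if $\theta\cdot\dim V=0$ and $\theta\cdot\dim V'\le0$ (resp. $<0$) for every nonzero proper subrepresentation $V'$. *)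

From Stdlib Require Rdefinitions.
From HB Require Import structures.
From mathcomp Require Import all_boot all_order all_algebra.
From mathcomp Require Import complex.
From mathcomp Require Import Rstruct.

Set Implicit Arguments.
Unset Strict Implicit.
Unset Printing Implicit Defensive.

Import Order.TTheory GRing.Theory Num.Theory.
Local Open Scope ring_scope.

Notation RR := Rdefinitions.R.
Notation CC := (complex RR).

(* A representation of the quiver Q of dimension vector (1,4,1):
   V_{-1} = C^1, V_0 = C^4, V_1 = C^1.  MathComp matrices act on ROW
   vectors by right multiplication, so f_{eta_i} : C^1 -> C^4 is a
   1x4 matrix and g_{phi_i} : C^4 -> C^1 is a 4x1 matrix; the composite
   g_{phi_i} o f_{eta_j} is the 1x1 matrix  f_{eta_j} *m g_{phi_i}. *)
Record rep141 := Rep141 {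
  f_eta : 'I_4 -> 'M[CC]_(1, 4);
  g_phi : 'I_4 -> 'M[CC]_(4, 1)
}.

Definition satisfies_relations (V : rep141) : Prop :=
  forall i j : 'I_4, (nat_of_ord i <= nat_of_ord j)%N ->
    f_eta V j *m g_phi V i + f_eta V i *m g_phi V j = 0.

Definition feta_comb (V : rep141) (l : 'I_4 -> CC) : 'M[CC]_(1, 4) :=
  \sum_(i < 4) l i *: f_eta V i.
Definition gphi_comb (V : rep141) (l : 'I_4 -> CC) : 'M[CC]_(4, 1) :=
  \sum_(i < 4) l i *: g_phi V i.

Definition mx_injective m n (A : 'M[CC]_(m, n)) : Prop :=
  forall v : 'rV[CC]_m, v *m A = 0 -> v = 0.
Definition mx_surjective m n (A : 'M[CC]_(m, n)) : Prop :=
  forall w : 'rV[CC]_n, exists v : 'rV[CC]_m, v *m A = w.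

Definition nonzero4 (l : 'I_4 -> CC) : Prop := exists i, l i != 0.

Definition rv_of (l : 'I_4 -> CC) : 'rV[CC]_4 := \row_i l i.

Definition globally_injective (V : rep141) : Prop :=
  forall l, nonzero4 l -> mx_injective (feta_comb V l).
Definition globally_surjective (V : rep141) : Prop :=
  forall l, nonzero4 l -> mx_surjective (gphi_comb V l).

(* "away from a subset of codimension at least 2": outside some linear
   subspace W of C^4 of dimension <= 2. *)
Definition locally_injective (V : rep141) : Prop :=
  exists W : 'M[CC]_4, (\rank W <= 2)%N /\
    forall l, nonzero4 l -> ~~ (rv_of l <= W)%MS -> mx_injective (feta_comb V l).
Definition locally_surjective (V : rep141) : Prop :=
  exists W : 'M[CC]_4, (\rank W <= 2)%N /\
    forall l, nonzero4 l -> ~~ (rv_of l <= W)%MS -> mx_surjective (gphi_comb V l).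

(* A subrepresentation: subspaces U_{-1} <= C^1, U_0 <= C^4, U_1 <= C^1
   (row spaces of square matrices) stable under all the arrows. *)
Definition is_subrep (V : rep141) (Um : 'M[CC]_1) (U0 : 'M[CC]_4) (Up : 'M[CC]_1)
  : Prop :=
  forall i : 'I_4, (Um *m f_eta V i <= U0)%MS /\ (U0 *m g_phi V i <= Up)%MS.

Definition theta_dot (t : RR * RR * RR) (dm d0 dp : nat) : RR :=
  t.1.1 * dm%:R + t.1.2 * d0%:R + t.2 * dp%:R.

Definition theta_semistable (t : RR * RR * RR) (V : rep141) : Prop :=
  theta_dot t 1 4 1 = 0 /\
  forall Um U0 Up, is_subrep V Um U0 Up ->
    let d := (\rank Um, \rank U0, \rank Up) in
    d != (0, 0, 0)%N -> d != (1, 4, 1)%N ->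
    theta_dot t (\rank Um) (\rank U0) (\rank Up) <= 0.

Definition theta_of (a c : RR) : RR * RR * RR := (a, - (a + c) / 4%:R, c).

(* Encode the arrows as 4x4 matrices: F with rows f_{eta_i} and G with columns
   g_{phi_i}.  Global injectivity (surjectivity) says that F (G) is invertible.
   The relations make M = F G antisymmetric, so M has rank 0 or at least 2;
   l F and G l^T can only vanish for l in the kernels of M and of M^T, hence
   when G (F) is invertible, local injectivity (surjectivity) reduces to
   F != 0 (G != 0).
   On the other side, theta.d = a (d_{-1} - d_1) + (a + c)/4 (4 d_1 - d_0).
   If a + c < 0, the subrepresentations (0, ker G, 0) and (1, 0, 0) destabilise
   unless G is invertible and F != 0, and under these two conditions every
   nonzero subrepresentation has d_{-1} <= d_1 = 1, hence theta.d <= 0.  If a + c > 0,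
   (1, im F, 1) and (1, C^4, 0) play the same role, and once F is invertible
   and G != 0 every proper subrepresentation has d_{-1} = 0. *)

From mathcomp Require Import all_boot all_order all_algebra.
From mathcomp Require Import complex Rstruct.
From mathcomp Require Import ring lra zify.

Set Implicit Arguments.
Unset Strict Implicit.
Unset Printing Implicit Defensive.

Import Order.TTheory GRing.Theory Num.Theory.
Local Open Scope ring_scope.

Lemma mxrank_antisym_ge2 (R : fieldType) n (M : 'M[R]_n) :
  2%:R != 0 :> R -> M^T = - M -> M != 0 -> (2 <= \rank M)%N.
Proof.
move=> two_neq0 antiM /matrix0Pn[i [j Mij_neq0]].
have Mji k l : M l k = - M k l by have /matrixP/(_ k l) := antiM; rewrite !mxE.
have Mkk k : M k k = 0.
  apply: (mulfI two_neq0); rewrite mulr0 mulr_natl mulr2n.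
  by rewrite {2}Mji subrr.
(* On columns j and i, rows i and j read (M i j, 0) and (0, - M i j). *)
pose ij (k : 'I_2) := if k == 0 then i else j.
have free_ij : row_free (rowsub ij M).
  apply: inj_row_free => v /matrixP vM0.
  have := vM0 0 i; have := vM0 0 j.
  rewrite !mxE !big_ord_recl !big_ord0 !mxE /ij /= !Mkk (Mji i j).
  rewrite mulrN !mulr0 addr0 add0r !addr0.
  move=> /eqP; rewrite mulf_eq0 (negbTE Mij_neq0) orbF => /eqP v0.
  move=> /eqP; rewrite oppr_eq0 mulf_eq0 (negbTE Mij_neq0) orbF => /eqP v1.
  apply/rowP => -[[|[|//]] lt_k2]; rewrite mxE; [rewrite -v0 | rewrite -v1];
    by congr (v 0 _); apply: val_inj.
by rewrite -(eqP free_ij) rowsubE mxrankM_maxr.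
Qed.

Lemma mx11_rank_cases (R : fieldType) (U : 'M[R]_1) :
  U = 0 /\ \rank U = 0%N \/ U \in unitmx /\ \rank U = 1%N.
Proof.
have [->|U_neq0] := eqVneq U 0; [left; split; rewrite ?mxrank0 // | right].
have U_unit : U \in unitmx.
  rewrite unitmxE det_mx11 unitfE; apply: contraNneq U_neq0 => U00.
  by rewrite [U]mx11_scalar U00 raddf0.
by split; last exact: mxrank_unit.
Qed.

Lemma mx_injective_rowE n (A : 'M[CC]_(1, n)) : mx_injective A <-> A != 0.
Proof.
split=> [A_inj | A_neq0 v].
  apply/eqP => A0; have := A_inj 1%:M.
  rewrite A0 mulmx0 => /(_ erefl)/matrixP/(_ 0 0).
  by rewrite !mxE => /eqP; rewrite oner_eq0.
rewrite [v]mx11_scalar mul_scalar_mx => /eqP; rewrite scaler_eq0 (negbTE A_neq0) orbF.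
by move=> /eqP->; rewrite raddf0.
Qed.

Lemma mx_surjective_colE n (A : 'M[CC]_(n, 1)) : mx_surjective A <-> A != 0.
Proof.
split=> [A_surj | /cV0Pn[r Ar_neq0] w].
  apply/eqP => A0; have [v] := A_surj 1%:M; rewrite A0 mulmx0 => /matrixP/(_ 0 0).
  by rewrite !mxE => /eqP; rewrite eq_sym oner_eq0.
exists ((w 0 0 / A r 0) *: delta_mx 0 r).
rewrite [w]mx11_scalar -scalemxAl -rowE.
by apply/rowP => k; rewrite (ord1 k) !mxE divfK.
Qed.

Lemma rv_of_row (v : 'rV[CC]_4) : rv_of (v 0) = v.
Proof. by apply/rowP => k; rewrite mxE. Qed.

Lemma nonzero4E l : nonzero4 l <-> rv_of l != 0.
Proof.
split=> [[k lk_neq0] | /rV0Pn[k]]; last by rewrite mxE; exists k.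
by apply/rV0Pn; exists k; rewrite mxE.
Qed.

Lemma unitmx_rv_ofP (A : 'M[CC]_4) :
  A \in unitmx <-> forall l, nonzero4 l -> rv_of l *m A != 0.
Proof.
rewrite -row_free_unit; split=> [A_free l /nonzero4E | A_inj].
  by rewrite mulmx_free_eq0.
apply: inj_row_free => v /eqP; apply: contraTeq => v_neq0.
by rewrite -[v]rv_of_row A_inj // nonzero4E rv_of_row.
Qed.

Lemma exists_nonzero4_notin (W : 'M[CC]_4) :
  (\rank W < 4)%N -> exists l, nonzero4 l /\ ~~ (rv_of l <= W)%MS.
Proof.
move=> rkW; have /row_subPn[k notin_W] : ~~ (1%:M <= W)%MS.
  by apply: contraL rkW => /mxrankS; rewrite mxrank1 -leqNgt.
exists (row k 1%:M 0); rewrite nonzero4E rv_of_row; split=> //.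
by apply: contraNneq notin_W => ->; apply: sub0mx.
Qed.

Section Rep141Matrices.
Variable V : rep141.

Definition feta_mx : 'M[CC]_4 := \matrix_(i, r) f_eta V i 0 r.
Definition gphi_mx : 'M[CC]_4 := \matrix_(r, i) g_phi V i r 0.
Definition relation_mx : 'M[CC]_4 := feta_mx *m gphi_mx.

Lemma row_feta_mx i : row i feta_mx = f_eta V i.
Proof. by apply/rowP => r; rewrite !mxE. Qed.

Lemma col_gphi_mx i : col i gphi_mx = g_phi V i.
Proof. by apply/colP => r; rewrite !mxE. Qed.

Lemma mulmx_g_phi m (A : 'M[CC]_(m, 4)) i : A *m g_phi V i = col i (A *m gphi_mx).
Proof. by apply/colP => r; rewrite !mxE; apply: eq_bigr => k _; rewrite !mxE. Qed.

Lemma feta_combE l : feta_comb V l = rv_of l *m feta_mx.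
Proof.
apply/rowP => r; rewrite /feta_comb summxE !mxE; apply: eq_bigr => i _.
by rewrite !mxE.
Qed.

Lemma gphi_combE l : gphi_comb V l = (rv_of l *m gphi_mx^T)^T.
Proof.
apply/colP => r; rewrite /gphi_comb summxE !mxE; apply: eq_bigr => i _.
by rewrite !mxE mulrC.
Qed.

Lemma globally_injectiveE : globally_injective V <-> feta_mx \in unitmx.
Proof.
by rewrite unitmx_rv_ofP; split=> inj l /inj; rewrite mx_injective_rowE feta_combE.
Qed.

Lemma globally_surjectiveE : globally_surjective V <-> gphi_mx \in unitmx.
Proof.
rewrite -unitmx_tr unitmx_rv_ofP.
by split=> surj l /surj; rewrite mx_surjective_colE gphi_combE trmx_eq0.
Qed.

Lemma relation_mxE i j : relation_mx i j = (f_eta V i *m g_phi V j) 0 0.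
Proof. by rewrite !mxE; apply: eq_bigr => k _; rewrite !mxE. Qed.

Lemma relation_mx_antisym : satisfies_relations V -> relation_mx^T = - relation_mx.
Proof.
move=> relV; apply/matrixP => i j; rewrite mxE [RHS]mxE !relation_mxE; apply/eqP.
rewrite -subr_eq0 opprK; without loss le_ij : i j / (i <= j)%N.
  by move=> wlog; case: (leqP i j) => [|/ltnW] /wlog //; rewrite addrC.
by have /matrixP/(_ 0 0) := relV i j le_ij; rewrite !mxE => ->.
Qed.

Lemma relation_mx_rank_ge2 :
  satisfies_relations V -> relation_mx != 0 -> (2 <= \rank relation_mx)%N.
Proof.
move=> relV; apply: mxrank_antisym_ge2 (relation_mx_antisym relV).
by rewrite pnatr_eq0.
Qed.

Lemma locally_injective_feta_neq0 : locally_injective V -> feta_mx != 0.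
Proof.
case=> W [rkW injW].
have [l [l_neq0 /(injW l l_neq0)]] :=
  exists_nonzero4_notin (leq_ltn_trans rkW (isT : 2 < 4)%N).
by rewrite mx_injective_rowE feta_combE; apply: contraNneq => ->; rewrite mulmx0.
Qed.

Lemma locally_surjective_gphi_neq0 : locally_surjective V -> gphi_mx != 0.
Proof.
case=> W [rkW surjW].
have [l [l_neq0 /(surjW l l_neq0)]] :=
  exists_nonzero4_notin (leq_ltn_trans rkW (isT : 2 < 4)%N).
rewrite mx_surjective_colE gphi_combE; apply: contraNneq => ->.
by rewrite trmx0 mulmx0 trmx0.
Qed.

Lemma locally_injective_of_unit :
  satisfies_relations V -> gphi_mx \in unitmx -> feta_mx != 0 -> locally_injective V.
Proof.
move=> relV G_unit F_neq0.
have M_neq0 : relation_mx != 0 by rewrite mulmx_free_eq0 ?row_free_unit.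
exists (kermx relation_mx); split.
  by rewrite mxrank_ker; have := relation_mx_rank_ge2 relV M_neq0; lia.
move=> l _; rewrite sub_kermx mx_injective_rowE feta_combE.
by apply: contraNneq => lF0; rewrite mulmxA lF0 mul0mx.
Qed.

Lemma locally_surjective_of_unit :
  satisfies_relations V -> feta_mx \in unitmx -> gphi_mx != 0 -> locally_surjective V.
Proof.
move=> relV F_unit G_neq0.
have M_neq0 : relation_mx != 0.
  by rewrite -trmx_eq0 trmx_mul mulmx_free_eq0 ?trmx_eq0 // row_free_unit unitmx_tr.
exists (kermx relation_mx^T); split.
  by rewrite mxrank_ker mxrank_tr; have := relation_mx_rank_ge2 relV M_neq0; lia.
move=> l _; rewrite sub_kermx mx_surjective_colE gphi_combE trmx_eq0 trmx_mul.
by apply: contraNneq => lG0; rewrite mulmxA lG0 mul0mx.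
Qed.

Lemma globally_surjective_locally_injectiveE : satisfies_relations V ->
  globally_surjective V /\ locally_injective V <-> gphi_mx \in unitmx /\ feta_mx != 0.
Proof.
move=> relV; rewrite globally_surjectiveE.
split=> [[G_unit /locally_injective_feta_neq0] | [G_unit F_neq0]] //.
by split; last exact: locally_injective_of_unit.
Qed.

Lemma globally_injective_locally_surjectiveE : satisfies_relations V ->
  globally_injective V /\ locally_surjective V <-> feta_mx \in unitmx /\ gphi_mx != 0.
Proof.
move=> relV; rewrite globally_injectiveE.
split=> [[F_unit /locally_surjective_gphi_neq0] | [F_unit G_neq0]] //.
by split; last exact: locally_surjective_of_unit.
Qed.

Lemma is_subrep_kermx_gphi : is_subrep V 0 (kermx gphi_mx) 0.
Proof. by move=> i; rewrite mul0mx mulmx_g_phi mulmx_ker col0 !sub0mx. Qed.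

Lemma is_subrep_feta_mx : is_subrep V 1%:M feta_mx 1%:M.
Proof. by move=> i; rewrite mul1mx -row_feta_mx row_sub submx1. Qed.

Lemma is_subrep_feta0 : feta_mx = 0 -> is_subrep V 1%:M 0 0.
Proof. by move=> F0 i; rewrite -row_feta_mx F0 row0 mulmx0 mul0mx !sub0mx. Qed.

Lemma is_subrep_gphi0 : gphi_mx = 0 -> is_subrep V 1%:M 1%:M 0.
Proof. by move=> G0 i; rewrite -col_gphi_mx G0 col0 mulmx0 sub0mx submx1. Qed.

Lemma subrep_mul_gphi0 Um U0 : is_subrep V Um U0 0 -> U0 *m gphi_mx = 0.
Proof.
move=> sub; apply/matrixP => r i; have [_] := sub i.
by rewrite submx0 mulmx_g_phi => /eqP/colP/(_ r); rewrite !mxE.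
Qed.

Lemma subrep_feta_sub Um U0 Up :
  is_subrep V Um U0 Up -> Um \in unitmx -> (feta_mx <= U0)%MS.
Proof.
move=> sub Um_unit; apply/row_subP => i.
rewrite row_feta_mx -(mulKmx Um_unit (f_eta V i)).
by apply: submx_trans (submxMl _ _) _; case: (sub i).
Qed.

End Rep141Matrices.

Lemma theta_of_dotE (a c : RR) (dm d0 dp : nat) :
  theta_dot (theta_of a c) dm d0 dp
  = a * (dm%:R - dp%:R) + (a + c) / 4%:R * (4%:R * dp%:R - d0%:R).
Proof. by rewrite /theta_dot /=; field. Qed.

Section Semistability.
Variables (V : rep141) (a c : RR).

Lemma semistable_gphi_unit : 0 < a -> c < - a ->
  theta_semistable (theta_of a c) V -> gphi_mx V \in unitmx /\ feta_mx V != 0.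
Proof.
move=> a_gt0 lt_c_Na [_ semiV]; split.
  apply: contraT => G_nunit.
  have k_gt0 : (0 < \rank (kermx (gphi_mx V)))%N.
    move: G_nunit; rewrite -row_free_unit /row_free mxrank_ker subn_gt0 ltn_neqAle.
    by rewrite rank_leq_row andbT.
  have := semiV _ _ _ (is_subrep_kermx_gphi V); rewrite /= mxrank0 !xpair_eqE /=.
  rewrite eqxx andbT -lt0n k_gt0 theta_of_dotE => /(_ isT isT).
  have : 0 < (\rank (kermx (gphi_mx V)))%:R :> RR by rewrite ltr0n.
  nra.
apply: contraT => /negPn/eqP F0.
have := semiV _ _ _ (is_subrep_feta0 F0); rewrite /= !mxrank0 mxrank1 theta_of_dotE.
move=> /(_ isT isT); nra.
Qed.

Lemma semistable_of_gphi_unit : 0 < a -> c < - a ->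
  gphi_mx V \in unitmx -> feta_mx V != 0 -> theta_semistable (theta_of a c) V.
Proof.
move=> a_gt0 lt_c_Na; rewrite -row_free_unit => G_free F_neq0.
split=> [|Um U0 Up sub /= d_neq0 _].
  by rewrite theta_of_dotE; lra.
have [[Up0 rkUp] | [_ rkUp]] := mx11_rank_cases Up.
  rewrite Up0 in sub.
  have U00 : U0 = 0.
    by apply/eqP; rewrite -(mulmx_free_eq0 _ G_free) (subrep_mul_gphi0 sub).
  have [[_ rkUm] | [Um_unit _]] := mx11_rank_cases Um.
    by move: d_neq0; rewrite rkUm rkUp U00 mxrank0.
  by move: F_neq0; rewrite -submx0 -U00 (subrep_feta_sub sub Um_unit).
have : (\rank Um)%:R <= 1%:R :> RR /\ (\rank U0)%:R <= 4%:R :> RR.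
  by split; rewrite ler_nat rank_leq_row.
rewrite theta_of_dotE rkUp; nra.
Qed.

Lemma semistable_feta_unit : c < 0 -> - a < c ->
  theta_semistable (theta_of a c) V -> feta_mx V \in unitmx /\ gphi_mx V != 0.
Proof.
move=> c_lt0 lt_Na_c [_ semiV]; split.
  apply: contraT; rewrite -row_free_unit /row_free => rkF_neq4.
  have := semiV _ _ _ (is_subrep_feta_mx V); rewrite /= mxrank1 !xpair_eqE /=.
  rewrite eqxx andbT (negbTE rkF_neq4) theta_of_dotE => /(_ isT isT).
  have : (\rank (feta_mx V))%:R < 4%:R :> RR.
    by rewrite ltr_nat ltn_neqAle rkF_neq4 rank_leq_row.
  nra.
apply: contraT => /negPn/eqP G0.
have := semiV _ _ _ (is_subrep_gphi0 G0); rewrite /= mxrank0 !mxrank1 theta_of_dotE.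
move=> /(_ isT isT); nra.
Qed.

Lemma semistable_of_feta_unit : c < 0 -> - a < c ->
  feta_mx V \in unitmx -> gphi_mx V != 0 -> theta_semistable (theta_of a c) V.
Proof.
move=> c_lt0 lt_Na_c F_unit G_neq0; split=> [|Um U0 Up sub /= _ d_neq_full].
  by rewrite theta_of_dotE; lra.
have [[_ rkUm] | [Um_unit rkUm]] := mx11_rank_cases Um.
  have : (\rank Up)%:R <= 1%:R :> RR by rewrite ler_nat rank_leq_row.
  have := ler0n RR (\rank Up); have := ler0n RR (\rank U0).
  rewrite theta_of_dotE rkUm; nra.
have U0_unit : U0 \in unitmx.
  rewrite -row_full_unit -sub1mx (submx_trans _ (subrep_feta_sub sub Um_unit)) //.
  by rewrite sub1mx row_full_unit.
have [[Up0 _] | [_ rkUp]] := mx11_rank_cases Up.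
  rewrite Up0 in sub.
  by rewrite -(mulKmx U0_unit (gphi_mx V)) (subrep_mul_gphi0 sub) mulmx0 eqxx in G_neq0.
by move: d_neq_full; rewrite rkUm rkUp (mxrank_unit U0_unit).
Qed.

End Semistability.

Theorem mainTheorem2 (a c : RR) :
  0 < a -> c < 0 ->
  (c < - a ->
    forall V : rep141, satisfies_relations V ->
      (theta_semistable (theta_of a c) V <->
         globally_surjective V /\ locally_injective V)) /\
  (- a < c ->
    forall V : rep141, satisfies_relations V ->
      (theta_semistable (theta_of a c) V <->
         globally_injective V /\ locally_surjective V)).
Proof.
move=> a_gt0 c_lt0; split=> lt_ac V relV.
  rewrite globally_surjective_locally_injectiveE //; split.
    exact: semistable_gphi_unit.
  by case; apply: semistable_of_gphi_unit.
rewrite globally_injective_locally_surjectiveE //; split.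
  exact: semistable_feta_unit.
by case; apply: semistable_of_feta_unit.
Qed.
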